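(* Let $m\ge 2$. For every $N\ge m$ and every integer $d$ with $1\le d\le N-m+1$, the degree of the vertex $v_m$ in the RRH of size $N$ satisfies $$\Pr[d(v_m)=d]=(m-1)\,\frac{\Gamma(N-d)\,\Gamma(N-m+1)}{\Gamma(N-d-m+2)\,\Gamma(N)}.$$ In particular, for $m=2$ the degree of $v_2$ is uniformly distributed on $\{1,\dots,N-1\}$, and for $m=3$, $\Pr[d(v_3)=d]=\frac{2(N-d-1)}{(N-1)(N-2)}$.
   Context: A random recursive hypergraph (RRH) is the random hypergraph process defined as follows. At size $N=1$ it has vertex set $\{v_1\}$ and edge set $\{\{v_1\}\}$. Given the hypergraph of size $N$ (vertices $v_1,\dots,v_N$, exactly $N$ edges), one chooses an existing edge $e$ uniformly at random, independently of the past, and adds a new vertex $v_{N+1}$ together with the new edge $e\cup\{v_{N+1}\}$. The degree $d(v)$ of a vertex $v$ is the number of edges containing it. *)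

From mathcomp Require Import all_boot all_order all_algebra.
Set Implicit Arguments. Unset Strict Implicit. Unset Printing Implicit Defensive.
Import Order.TTheory GRing.Theory Num.Theory.

(* Vertices are the naturals 1, 2, ..., N (v_i is i).  Edges are listed in
   creation order; edge k (1-indexed) is created when going from size k-1 to
   size k.  A hypergraph of size N is determined by the sequence of choices
   c_1, ..., c_{N-1}, where c_k in {1,...,k} is the (1-indexed) edge chosen
   when growing from size k to size k+1. *)

Definition rrh_step (E : seq (seq nat)) (ch : nat) : seq (seq nat) :=
  rcons E (rcons (nth [::] E ch.-1) (size E).+1).

(* Edges of the hypergraph generated by the choice sequence c
   (size of the hypergraph = size c + 1). *)
Definition rrh_edges (c : seq nat) : seq (seq nat) :=
  foldl rrh_step [:: [:: 1%N]] c.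

Definition rrh_degree (c : seq nat) (v : nat) : nat :=
  count (fun e => v \in e) (rrh_edges c).

Fixpoint choice_seqs (n : nat) : seq (seq nat) :=
  match n with
  | 0 => [:: [::]]
  | n'.+1 => [seq rcons s k | s <- choice_seqs n', k <- iota 1 n'.+1]
  end.

(* Probability of a given choice sequence: the k-th choice is uniform among
   k edges, independently of the past. *)
Definition seq_prob {R : numFieldType} (s : seq nat) : R :=
  \prod_(i < size s) (i.+1%:R)^-1.

Definition rrh_prob {R : numFieldType} (N : nat) (ev : seq nat -> bool) : R :=
  \sum_(s <- choice_seqs N.-1) seq_prob s * (ev s)%:R.

(* Gamma function at positive integers: Gamma(n) = (n-1)!. *)
Definition GammaN {R : numFieldType} (n : nat) : R := (n.-1)`!%:R.

From mathcomp Require Import all_boot all_order all_algebra.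
From mathcomp Require Import zify ring.
Import Order.TTheory GRing.Theory Num.Theory.

(* Growing the hypergraph of size n+1 by one step raises the degree of an existing
   vertex v exactly when the chosen edge contains v, i.e. for deg(v) of the n+1
   equally likely choices.  Hence the number c_n(d) of choice sequences of length n
   giving v degree d satisfies c_{n+1}(d+1) = d c_n(d) + (n-d) c_n(d+1), starting
   from c_{m-1}(1) = (m-1)! for v = v_m, which is just created at that size.  This
   recursion is solved by c_n(d) = (m-1)! (n-m+1)! C(n-d, m-2), and dividing by the
   (N-1)! equally likely sequences of length N-1 gives the stated probabilities. *)

Lemma sum_bool_count (T : Type) (a : pred T) (r : seq T) :
  \sum_(x <- r) a x = count a r.
Proof. by elim: r => [|x r IH]; rewrite ?big_nil ?big_cons ?IH. Qed.

Lemma size_choice_seqs n : size (choice_seqs n) = n`!.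
Proof. by elim: n => [|n IH] //; rewrite size_allpairs IH size_iota factS mulnC. Qed.

Lemma size_mem_choice_seqs n s : s \in choice_seqs n -> size s = n.
Proof.
elim: n s => [|n IH] s; first by rewrite inE => /eqP->.
by case/allpairsP=> -[s' k] /= [/IH <- _ ->]; rewrite size_rcons.
Qed.

Lemma rrh_edges_rcons s k : rrh_edges (rcons s k) = rrh_step (rrh_edges s) k.
Proof. by rewrite /rrh_edges foldl_rcons. Qed.

Lemma size_rrh_edges s : size (rrh_edges s) = (size s).+1.
Proof.
elim/last_ind: s => [//|s k IH].
by rewrite rrh_edges_rcons /rrh_step size_rcons IH size_rcons.
Qed.

Lemma rrh_edges_bound s e v : e \in rrh_edges s -> v \in e -> v <= (size s).+1.
Proof.
elim/last_ind: s e => [|s k IH] e; first by rewrite inE => /eqP->; rewrite inE => /eqP->.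
rewrite rrh_edges_rcons /rrh_step mem_rcons inE size_rcons.
case/orP => [/eqP-> | /IH Hv /Hv /leqW //].
rewrite mem_rcons inE size_rrh_edges => /orP [/eqP-> // | Hv].
have [Hk|Hk] := ltnP k.-1 (size (rrh_edges s)); last by rewrite nth_default in Hv.
exact/leqW/(IH _ (mem_nth [::] Hk) Hv).
Qed.

Lemma rrh_degree_absent s v : (size s).+1 < v -> rrh_degree s v = 0.
Proof.
move=> Hv; apply/eqP; rewrite -leqn0 leqNgt -has_count.
by apply/hasP => -[e /rrh_edges_bound He /He]; rewrite leqNgt Hv.
Qed.

Lemma rrh_degree_rcons s k v :
  rrh_degree (rcons s k) v =
  rrh_degree s v + ((v == (size s).+2) || (v \in nth [::] (rrh_edges s) k.-1)).
Proof.
by rewrite /rrh_degree rrh_edges_rcons /rrh_step -cats1 count_cat /= addn0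
  mem_rcons inE size_rrh_edges.
Qed.

Lemma sum_mem_nth (E : seq (seq nat)) v :
  \sum_(k <- iota 1 (size E)) (v \in nth [::] E k.-1) = count (fun e => v \in e) E.
Proof.
by rewrite (iotaDl 1 0) big_map -[in RHS](mkseq_nth [::] E) count_map -sum_bool_count.
Qed.

Lemma rrh_degree_rcons_le s k v : v <= (size s).+1 ->
  rrh_degree (rcons s k) v = rrh_degree s v + (v \in nth [::] (rrh_edges s) k.-1).
Proof. by move=> le_v; rewrite rrh_degree_rcons ltn_eqF. Qed.

Lemma sum_rrh_degree_rcons s v d : v <= (size s).+1 ->
  \sum_(k <- iota 1 (size s).+1) (rrh_degree (rcons s k) v == d.+1) =
  (rrh_degree s v == d) * d + (rrh_degree s v == d.+1) * (size s - d).
Proof.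
move=> le_v; set D := rrh_degree s v.
set hit := fun k => v \in nth [::] (rrh_edges s) k.-1.
have sum_hit : \sum_(k <- iota 1 (size s).+1) hit k = D.
  by rewrite -size_rrh_edges sum_mem_nth.
have sum_miss : \sum_(k <- iota 1 (size s).+1) ~~ hit k = (size s).+1 - D.
  by rewrite -sum_hit !sum_bool_count -{2}(size_iota 1 (size s).+1)
    -(count_predC hit (iota 1 _)) addKn.
transitivity (\sum_(k <- iota 1 (size s).+1)
                ((D == d) * hit k + (D == d.+1) * ~~ hit k)).
  apply: eq_bigr => k _; rewrite rrh_degree_rcons_le // -/D -/(hit k).
  by case: (hit k); do ! case: eqP; lia.
by rewrite big_split -!big_distrr /= sum_hit sum_miss; do ! case: eqP; lia.
Qed.

Definition degree_count n v d := \sum_(s <- choice_seqs n) (rrh_degree s v == d).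

Lemma degree_count_rec n v d : v <= n.+1 ->
  degree_count n.+1 v d.+1 = d * degree_count n v d + (n - d) * degree_count n v d.+1.
Proof.
move=> le_v; rewrite /degree_count big_allpairs_dep /=.
rewrite (eq_big_seq (fun s =>
  (rrh_degree s v == d) * d + (rrh_degree s v == d.+1) * (n - d))).
  by rewrite big_split -!big_distrl /= mulnC [_ * (n - d)]mulnC.
by move=> s /size_mem_choice_seqs size_s; rewrite -{1}size_s sum_rrh_degree_rcons size_s.
Qed.

Lemma degree_count_newest n d : degree_count n.+1 n.+2 d = (d == 1) * (n.+1)`!.
Proof.
rewrite /degree_count (eq_big_seq (fun=> d == 1 : nat)).
  by rewrite big_const_seq count_predT size_choice_seqs iter_addn_0 mulnC.
move=> _ /allpairsP[[s k] /= [/size_mem_choice_seqs Hs _ ->]].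
by rewrite rrh_degree_rcons rrh_degree_absent Hs // eqxx eq_sym.
Qed.

Lemma mul_bin_addn p e : (p + e).+1 * 'C(p + e, p) = e.+1 * 'C((p + e).+1, p).
Proof. by rewrite (mul_bin_down (p + e).+1 p) subSn ?leq_addr // addKn. Qed.

(* The count of sequences of length (p + j).+1 giving v_(p+2) degree d.+1,
   i.e. (m-1)! (N-m)! C(N-1-d, m-2) with m = p + 2, N = p + j + 2. *)
Definition degree_count_formula p j d := (d <= j) * ((p.+1)`! * j`! * 'C(p + j - d, p)).

Lemma degree_count_formula_rec0 p j :
  (p + j).+1 * degree_count_formula p j 0 = degree_count_formula p j.+1 0.
Proof.
rewrite /degree_count_formula !leq0n !mul1n !subn0 addnS.
by rewrite mulnCA mul_bin_addn (factS j); ring.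
Qed.

Lemma degree_count_formula_recS p j d :
  d.+1 * degree_count_formula p j d + ((p + j).+1 - d.+1) * degree_count_formula p j d.+1
  = degree_count_formula p j.+1 d.+1.
Proof.
rewrite /degree_count_formula; case: (ltngtP d j) => [lt_dj | lt_jd | <-].
- have [e ->] : exists e, j = d + e.+1 by exists (j - d.+1); lia.
  have -> : p + (d + e.+1) - d = (p + e).+1 by lia.
  have -> : (p + (d + e.+1)).+1 - d.+1 = (p + e).+1 by lia.
  have -> : p + (d + e.+1) - d.+1 = p + e by lia.
  have -> : p + (d + e.+1).+1 - d.+1 = (p + e).+1 by lia.
  rewrite ltnS leq_addr !mul1n.
  transitivity ((p.+1)`! * (d + e.+1)`! * (d.+1 * 'C((p + e).+1, p)
    + (p + e).+1 * 'C(p + e, p))); first by ring.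
  by rewrite mul_bin_addn (factS (d + e.+1)); ring.
- by rewrite ltnS leqNgt lt_jd /= !mul0n !muln0.
- by rewrite ltnSn !addnK binn (factS d) !mul1n !mul0n; ring.
Qed.

Lemma degree_count_closed p j d :
  degree_count (p + j).+1 p.+2 d.+1 = degree_count_formula p j d.
Proof.
elim: j d => [|j IH] [|d].
- by rewrite addn0 degree_count_newest /degree_count_formula !addn0 subn0 binn !muln1.
- by rewrite addn0 degree_count_newest /degree_count_formula ltn0.
- rewrite addnS degree_count_rec; last by rewrite !ltnS leq_addr.
  by rewrite mul0n add0n subn0 IH degree_count_formula_rec0.
- rewrite addnS degree_count_rec; last by rewrite !ltnS leq_addr.
  by rewrite !IH degree_count_formula_recS.
Qed.

Local Open Scope ring_scope.

Lemma seq_probE (R : numFieldType) s : seq_prob s = ((size s)`!%:R)^-1 :> R.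
Proof.
rewrite /seq_prob; elim: (size s) => [|n IH]; first by rewrite big_ord0 fact0 invr1.
by rewrite big_ord_recr IH /= factS natrM invfM mulrC.
Qed.

Lemma rrh_probE (R : numFieldType) N (ev : seq nat -> bool) :
  rrh_prob N ev = (\sum_(s <- choice_seqs N.-1) ev s)%:R / (N.-1)`!%:R :> R.
Proof.
rewrite /rrh_prob natr_sum mulr_suml; apply: eq_big_seq => s /size_mem_choice_seqs size_s.
by rewrite seq_probE size_s mulrC.
Qed.

Lemma natr_div_eq (R : numFieldType) (a b c d : nat) :
  b != 0%N -> d != 0%N -> (a * d = c * b)%N -> a%:R / b%:R = c%:R / d%:R :> R.
Proof.
move=> b_neq0 d_neq0 eq_ad_cb.
by apply/eqP; rewrite eqr_div ?pnatr_eq0 // -!natrM eq_ad_cb.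
Qed.

Lemma rrh_degree_prob (R : numFieldType) p j d : (d <= j)%N ->
  rrh_prob (p + j).+2 (fun c => rrh_degree c p.+2 == d.+1) =
  ((p.+1)`! * j`! * 'C(p + j - d, p))%:R / ((p + j).+1)`!%:R :> R.
Proof.
move=> le_dj; rewrite rrh_probE -[(p + j).+2.-1]/(p + j).+1.
by rewrite -[(\sum_(_ <- _) _)%N]/(degree_count (p + j).+1 p.+2 d.+1)
  degree_count_closed /degree_count_formula le_dj mul1n.
Qed.

Lemma rrh_degree_prob_Gamma (R : numFieldType) (m N d : nat) :
  (2 <= m)%N -> (m <= N)%N -> (1 <= d)%N -> (d <= N - m + 1)%N ->
  rrh_prob N (fun c => rrh_degree c m == d) =
    (m - 1)%:R * (GammaN (N - d) * GammaN (N - m + 1))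
      / (GammaN (N + 2 - d - m) * GammaN N) :> R.
Proof.
move=> le2m lemN le1d ledN.
have [p em] : exists p, m = p.+2 by exists (m - 2)%N; lia.
have [d' ed] : exists d', d = d'.+1 by exists d.-1; lia.
have [e eN] : exists e, N = (p + (d' + e)).+2 by exists (N - m - d')%N; lia.
subst m d N; rewrite rrh_degree_prob ?leq_addr // /GammaN -!natrM.
apply: natr_div_eq; rewrite ?muln_eq0 ?negb_or -?lt0n ?fact_gt0 //.
have -> : (p + (d' + e) - d' = p + e)%N by lia.
have -> : ((p + (d' + e)).+2 - d'.+1 = (p + e).+1)%N by lia.
have -> : ((p + (d' + e)).+2 - p.+2 + 1 = (d' + e).+1)%N by lia.
have -> : ((p + (d' + e)).+2 + 2 - d'.+1 - p.+2 = e.+1)%N by lia.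
by rewrite subn1 !succnK -(bin_fact (leq_addr e p)) addKn (factS p); ring.
Qed.

Lemma rrh_degree2_prob (R : numFieldType) (N d : nat) :
  (2 <= N)%N -> (1 <= d <= N - 1)%N ->
  rrh_prob N (fun c => rrh_degree c 2 == d) = (N - 1)%:R^-1 :> R.
Proof.
move=> le2N /andP [le1d ledN].
have [d' ed] : exists d', d = d'.+1 by exists d.-1; lia.
have [j eN] : exists j, N = (0 + j).+2 by exists (N - 2)%N; lia.
subst d N; rewrite rrh_degree_prob; last by lia.
rewrite -[RHS]div1r -[1 / _]/(1%:R / _).
apply: natr_div_eq; rewrite -?lt0n ?fact_gt0 ?subn_gt0 //.
by rewrite subn1 /= bin0 add0n (factS j) !mul1n muln1 mulnC.
Qed.

Lemma rrh_degree3_prob (R : numFieldType) (N d : nat) :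
  (3 <= N)%N -> (1 <= d <= N - 2)%N ->
  rrh_prob N (fun c => rrh_degree c 3 == d) =
    2 * (N - d - 1)%:R / ((N - 1)%:R * (N - 2)%:R) :> R.
Proof.
move=> le3N /andP [le1d ledN].
have [d' ed] : exists d', d = d'.+1 by exists d.-1; lia.
have [j eN] : exists j, N = (1 + j).+2 by exists (N - 3)%N; lia.
subst d N; rewrite rrh_degree_prob; last by lia.
rewrite -!natrM.
apply: natr_div_eq; rewrite ?muln_eq0 ?negb_or -?lt0n ?fact_gt0 ?subn_gt0 //.
have -> : ((1 + j).+2 - 1 = j.+2)%N by lia.
have -> : ((1 + j).+2 - 2 = j.+1)%N by lia.
have -> : ((1 + j).+2 - d'.+1 - 1 = 1 + j - d')%N by lia.
rewrite bin1 add1n (factS j.+1) (factS j) -[2`!]/(2%N).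
(* [ring] rejects truncated subtraction, so the difference is abstracted first. *)
by move: (1 + j - d')%N => k; ring.
Qed.

Theorem mainTheorem10 (R : realFieldType) :
  (forall (m N d : nat), (2 <= m)%N -> (m <= N)%N -> (1 <= d)%N ->
     (d <= N - m + 1)%N ->
     rrh_prob N (fun c => rrh_degree c m == d) =
       (m - 1)%:R * (GammaN (N - d) * GammaN (N - m + 1))
         / (GammaN (N + 2 - d - m) * GammaN N) :> R)
  /\ (forall (N d : nat), (2 <= N)%N -> (1 <= d <= N - 1)%N ->
     rrh_prob N (fun c => rrh_degree c 2 == d) = (N - 1)%:R^-1 :> R)
  /\ (forall (N d : nat), (3 <= N)%N -> (1 <= d <= N - 2)%N ->
     rrh_prob N (fun c => rrh_degree c 3 == d) =
       2 * (N - d - 1)%:R / ((N - 1)%:R * (N - 2)%:R) :> R).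
Proof.
split; first exact: rrh_degree_prob_Gamma.
by split; [exact: rrh_degree2_prob | exact: rrh_degree3_prob].
Qed.
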